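(* Let $A,B\in\mathrm{SL}_2\mathbb{R}$ be noncommuting hyperbolic matrices with $\mathrm{tr}(A),\mathrm{tr}(B)\ge 2$, and assume that the pair $A,B$ is coherently oriented with $I^+\cap I^-=\emptyset$. Then $\ell(AB)$ is less than, equal to, or greater than $\ell(A)+\ell(B)$ if and only if the translation axes of $A$ and $B$ are intersecting, asymptotically parallel (distinct, sharing an ideal endpoint), or ultraparallel (disjoint with no common ideal endpoint), respectively.
   Context: $\mathrm{SL}_2\mathbb{R}$ acts on the hyperbolic plane $\mathcal{H}=\{z\in\mathbb{C}:\operatorname{Im}z>0\}$ and on its boundary $\partial\mathcal{H}=\mathbb{P}^1\mathbb{R}$ by Möbius transformations. A nonidentity matrix of trace $\ge 2$ is parabolic (one fixed point in $\partial\mathcal{H}$, trace $=2$) or hyperbolic (two fixed points, trace $>2$). For a hyperbolic $A$, $\alpha^+$ denotes its attracting fixed point and $\alpha^-$ its repelling one (similarly $\beta^\pm$ for $B$); for parabolic $A$, $\alpha^+=\alpha^-$ is its unique fixed point. The translation length is $\ell(A)=\inf\{d(z,A*z):z\in\mathcal{H}\}$ ($d$ the hyperbolic distance); for hyperbolic $A$ the translation axis is the geodesic with endpoints $\alpha^+,\alpha^-$. The circle $\partial\mathcal{H}$ is cyclically (counterclockwise) ordered, and for distinct $\alpha,\beta$ the closed interval $[\alpha,\beta]$ consists of $\alpha,\beta$ and the points met travelling counterclockwise from $\alpha$ to $\beta$. For noncommuting $A,B$ of trace $\ge2$: if $\alpha^+=\beta^+$ let $I^+=\{\alpha^+\}$;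 otherwise $I^+$ is the one of the two intervals $[\alpha^+,\beta^+]$, $[\beta^+,\alpha^+]$ mapped into itself by both $A$ and $B$, if such exists (else $I^+$ is undefined). $I^-$ is defined in the same way using $A^{-1},B^{-1}$ and $\alpha^-,\beta^-$. The pair $A,B$ is coherently oriented if both $I^+$ and $I^-$ are defined. *)

From Stdlib Require Import Reals Lra.
From Coquelicot Require Import Coquelicot.
Open Scope R_scope.

Record M2 := mkM2 { m11 : R; m12 : R; m21 : R; m22 : R }.

Definition mmul (A B : M2) : M2 :=
  mkM2 (m11 A * m11 B + m12 A * m21 B) (m11 A * m12 B + m12 A * m22 B)
       (m21 A * m11 B + m22 A * m21 B) (m21 A * m12 B + m22 A * m22 B).

Definition mdet (A : M2) : R := m11 A * m22 A - m12 A * m21 A.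
Definition mtr (A : M2) : R := m11 A + m22 A.

(** inverse of a determinant-one matrix *)
Definition minv (A : M2) : M2 := mkM2 (m22 A) (- m12 A) (- m21 A) (m11 A).

Definition in_SL2 (A : M2) : Prop := mdet A = 1.

Definition hyperbolic (A : M2) : Prop := 2 < mtr A.
Definition parabolic (A : M2) : Prop := A <> mkM2 1 0 0 1 /\ mtr A = 2.

Definition in_H (z : C) : Prop := 0 < Im z.

Definition mob (A : M2) (z : C) : C :=
  Cdiv (Cplus (Cmult (RtoC (m11 A)) z) (RtoC (m12 A)))
       (Cplus (Cmult (RtoC (m21 A)) z) (RtoC (m22 A))).

Definition arcosh (x : R) : R := ln (x + sqrt (x ^ 2 - 1)).

Definition hdist (z w : C) : R :=
  arcosh (1 + (Cmod (Cminus z w)) ^ 2 / (2 * Im z * Im w)).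

Definition tlen (A : M2) : R :=
  real (Glb_Rbar (fun r => exists z, in_H z /\ r = hdist z (mob A z))).

(** Boundary P^1(R) = R u {oo}, with None standing for oo *)
Definition P1 := option R.

Definition act (A : M2) (p : P1) : P1 :=
  match p with
  | None => if Req_EM_T (m21 A) 0 then None else Some (m11 A / m21 A)
  | Some x =>
      if Req_EM_T (m21 A * x + m22 A) 0 then None
      else Some ((m11 A * x + m12 A) / (m21 A * x + m22 A))
  end.

(** the point of P^1 R given by the line through (x, y) <> (0,0) *)
Definition proj (x y : R) : P1 := if Req_EM_T y 0 then None else Some (x / y).

Definition fixed (A : M2) (p : P1) : Prop := act A p = p.

Definition eigenline (A : M2) (l : R) (p : P1) : Prop :=
  exists x y, (x <> 0 \/ y <> 0) /\
    m11 A * x + m12 A * y = l * x /\ m21 A * x + m22 A * y = l * y /\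
    p = proj x y.

(** attracting / repelling fixed points (for parabolic A, the unique fixed
    point); for hyperbolic A of positive trace they are the eigenlines of the
    eigenvalue > 1, resp. in (0,1). *)
Definition attr_fp (A : M2) (p : P1) : Prop :=
  (parabolic A /\ fixed A p) \/
  (hyperbolic A /\ exists l, 1 < l /\ eigenline A l p).

Definition rep_fp (A : M2) (p : P1) : Prop :=
  (parabolic A /\ fixed A p) \/
  (hyperbolic A /\ exists l, 0 < l < 1 /\ eigenline A l p).

(** Counterclockwise cyclic order on P^1 R = boundary of H:
    increasing along R, then through oo.
    [strictly_between a b x]: x is met strictly after a and strictly
    before b when travelling counterclockwise from a (a <> b). *)
Definition strictly_between (a b x : P1) : Prop :=
  match a, b, x with
  | Some a, Some b, Some x => if Rlt_dec a b then a < x < b else (a < x \/ x < b)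
  | Some a, Some b, None => b < a
  | Some a, None, Some x => a < x
  | None, Some b, Some x => x < b
  | _, _, _ => False
  end.

Definition cinterval (a b : P1) (x : P1) : Prop :=
  x = a \/ x = b \/ strictly_between a b x.

Definition maps_into (f : P1 -> P1) (I : P1 -> Prop) : Prop :=
  forall x, I x -> I (f x).

Definition interval_choice (f g : P1 -> P1) (a b : P1) (I : P1 -> Prop) : Prop :=
  (a = b /\ forall x, I x <-> x = a) \/
  (a <> b /\
   ((forall x, I x <-> cinterval a b x) \/ (forall x, I x <-> cinterval b a x)) /\
   maps_into f I /\ maps_into g I).

Definition Iplus (A B : M2) (I : P1 -> Prop) : Prop :=
  exists ap bp, attr_fp A ap /\ attr_fp B bp /\
    interval_choice (act A) (act B) ap bp I.

Definition Iminus (A B : M2) (I : P1 -> Prop) : Prop :=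
  exists am bm, rep_fp A am /\ rep_fp B bm /\
    interval_choice (act (minv A)) (act (minv B)) am bm I.

Definition coherently_oriented (A B : M2) : Prop :=
  (exists I, Iplus A B I) /\ (exists I, Iminus A B I).

Definition on_geodesic (p q : P1) (z : C) : Prop :=
  in_H z /\
  match p, q with
  | Some x, Some y => x <> y /\ (Re z - (x + y) / 2) ^ 2 + Im z ^ 2 = ((x - y) / 2) ^ 2
  | Some x, None => Re z = x
  | None, Some y => Re z = y
  | None, None => False
  end.

Definition geod_intersecting (p1 q1 p2 q2 : P1) : Prop :=
  exists z, on_geodesic p1 q1 z /\ on_geodesic p2 q2 z.

Definition same_endpoints (p1 q1 p2 q2 : P1) : Prop :=
  (p1 = p2 /\ q1 = q2) \/ (p1 = q2 /\ q1 = p2).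

Definition share_endpoint (p1 q1 p2 q2 : P1) : Prop :=
  p1 = p2 \/ p1 = q2 \/ q1 = p2 \/ q1 = q2.

Definition geod_asymptotically_parallel (p1 q1 p2 q2 : P1) : Prop :=
  ~ same_endpoints p1 q1 p2 q2 /\ share_endpoint p1 q1 p2 q2.

Definition geod_ultraparallel (p1 q1 p2 q2 : P1) : Prop :=
  ~ geod_intersecting p1 q1 p2 q2 /\ ~ share_endpoint p1 q1 p2 q2.

(* For a hyperbolic M of trace r + 1/r (r > 1) the displacement is minimal on the axis and
   l(M) = 2 ln r, so l(AB) - l(A) - l(B) has the sign of tr(AB) - (la mb + 1/(la mb)), where
   la, mb > 1 are the expanding eigenvalues of A and B.  Writing A and B in their eigenbases,
   this difference is a positive multiple of the product of brackets
   [a+,b-][b+,a-][a+,b+][b-,a-]; the multiplier is positive exactly because I+ and I- are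
   disjoint, which puts a- and b- on the same side of the chord a+b+.  The same product
   decides how the axes sit: it is negative iff the two geodesic circles meet in H, zero iff
   they share an ideal endpoint, and positive otherwise. *)

From Stdlib Require Import Reals Lra Psatz Classical.
From Coquelicot Require Import Coquelicot.
Open Scope R_scope.

Lemma arcosh_le x y : 1 <= x -> x <= y -> arcosh x <= arcosh y.
Proof.
  intros H1 H2. unfold arcosh. apply ln_le.
  - assert (0 <= sqrt (x ^ 2 - 1)) by apply sqrt_pos. lra.
  - apply Rplus_le_compat; auto. apply sqrt_le_1_alt. nra.
Qed.

Lemma mob_coords a b c d x y : 0 < y -> a * d - b * c = 1 ->
  let N := (c * x + d) ^ 2 + (c * y) ^ 2 in
  0 < N /\
  Re (mob (mkM2 a b c d) (x, y)) = ((a * x + b) * (c * x + d) + a * c * y ^ 2) / N /\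
  Im (mob (mkM2 a b c d) (x, y)) = y / N.
Proof.
  intros Hy Hdet N.
  assert (HN : 0 < N).
  { unfold N. destruct (Req_dec c 0) as [->|Hc].
    - assert (d <> 0) by (intro; subst; lra).
      assert (0 < d ^ 2) by (apply pow2_gt_0; auto). nra.
    - assert (0 < (c * y) ^ 2) by (apply pow2_gt_0, Rmult_integral_contrapositive; split; lra).
      assert (0 <= (c * x + d) ^ 2) by apply pow2_ge_0. lra. }
  split; auto.
  unfold mob, Cdiv, Cinv, Cmult, Cplus, RtoC, Re, Im; simpl.
  replace ((c * x - 0 * y + d) * ((c * x - 0 * y + d) * 1)
           + (c * y + 0 * x + 0) * ((c * y + 0 * x + 0) * 1)) with N by (unfold N; ring).
  split; [field; lra|].
  transitivity (y * (a * d - b * c) / N); [field; lra|]. rewrite Hdet. field; lra.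
Qed.

(* The displacement of (x, y) is minimal exactly when the quadratic term vanishes,
   i.e. on the translation axis. *)
Lemma hdist_mob a b c d x y : 0 < y -> a * d - b * c = 1 ->
  hdist (x, y) (mob (mkM2 a b c d) (x, y)) =
  arcosh ((a + d) ^ 2 / 2 - 1 + (c * x ^ 2 + (d - a) * x - b + c * y ^ 2) ^ 2 / (2 * y ^ 2)).
Proof.
  intros Hy Hdet.
  destruct (mob_coords a b c d x y Hy Hdet) as [HN [Hre Him]].
  set (N := (c * x + d) ^ 2 + (c * y) ^ 2) in *.
  unfold hdist. f_equal.
  set (w := mob (mkM2 a b c d) (x, y)) in *.
  assert (Hmod : Cmod (Cminus (x, y) w) ^ 2 = (x - Re w) ^ 2 + (y - Im w) ^ 2).
  { unfold Cmod, Cminus, Cplus, Copp; cbn [fst snd]. rewrite pow2_sqrt.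
    - unfold Re, Im; ring.
    - apply Rplus_le_le_0_compat; apply pow2_ge_0. }
  rewrite Hmod. change (Im (x, y)) with y. rewrite Hre, Him.
  replace ((x - ((a * x + b) * (c * x + d) + a * c * y ^ 2) / N) ^ 2 + (y - y / N) ^ 2)
    with (((c * (x ^ 2 - y ^ 2) + (d - a) * x - b) ^ 2 + (y * (2 * c * x + (d - a))) ^ 2) / N)
    by (replace (y / N) with (y * (a * d - b * c) / N) by (rewrite Hdet; field; lra);
        unfold N in *; field; lra).
  transitivity (1 + ((a + d) ^ 2 - 4 * (a * d - b * c)) / 2
                + (c * x ^ 2 + (d - a) * x - b + c * y ^ 2) ^ 2 / (2 * y ^ 2)).
  - field. split; lra.
  - rewrite Hdet. field. lra.
Qed.

Lemma tlen_lower_bound M z : mdet M = 1 -> 4 < mtr M ^ 2 -> in_H z ->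
  arcosh (mtr M ^ 2 / 2 - 1) <= hdist z (mob M z).
Proof.
  destruct M as [a b c d], z as [x y]. unfold mdet, mtr, in_H; cbn [m11 m12 m21 m22 Im fst snd].
  intros Hdet Htr Hy.
  rewrite hdist_mob; auto. apply arcosh_le; [lra|].
  assert (0 <= (c * x ^ 2 + (d - a) * x - b + c * y ^ 2) ^ 2 / (2 * y ^ 2)).
  { apply Rdiv_le_0_compat; [apply pow2_ge_0 | nra]. }
  lra.
Qed.

Lemma tlen_attained M : mdet M = 1 -> 4 < mtr M ^ 2 ->
  exists z, in_H z /\ hdist z (mob M z) = arcosh (mtr M ^ 2 / 2 - 1).
Proof.
  destruct M as [a b c d]. unfold mdet, mtr; cbn [m11 m12 m21 m22]. intros Hdet Htr.
  assert (Hdisc : (d - a) ^ 2 + 4 * b * c = (a + d) ^ 2 - 4).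
  { replace 4 with (4 * (a * d - b * c)) at 2 by (rewrite Hdet; ring). ring. }
  destruct (Req_dec c 0) as [Hc|Hc].
  - subst c. assert (Hda : d - a <> 0) by (intro Z; rewrite Z in Hdisc; nra).
    exists (b / (d - a), 1). split; [unfold in_H; simpl; lra|].
    rewrite hdist_mob; try lra. f_equal.
    replace (0 * (b / (d - a)) ^ 2 + (d - a) * (b / (d - a)) - b + 0 * 1 ^ 2) with 0
      by (field; auto).
    field.
  - assert (Hq : 0 < ((a + d) ^ 2 - 4) / (4 * c ^ 2)).
    { apply Rdiv_lt_0_compat; [lra|]. assert (0 < c ^ 2) by (apply pow2_gt_0; auto). lra. }
    set (y := sqrt (((a + d) ^ 2 - 4) / (4 * c ^ 2))).
    assert (Hy : 0 < y) by (apply sqrt_lt_R0; auto).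
    assert (Hy2 : y ^ 2 = ((a + d) ^ 2 - 4) / (4 * c ^ 2)) by (apply pow2_sqrt; lra).
    exists (- (d - a) / (2 * c), y). split; [unfold in_H; simpl; auto|].
    rewrite hdist_mob; auto. f_equal.
    replace (c * (- (d - a) / (2 * c)) ^ 2 + (d - a) * (- (d - a) / (2 * c)) - b + c * y ^ 2)
      with 0 by (rewrite Hy2, <- Hdisc; field; auto).
    field. lra.
Qed.

Lemma tlen_formula M : mdet M = 1 -> 4 < mtr M ^ 2 ->
  tlen M = arcosh (mtr M ^ 2 / 2 - 1).
Proof.
  intros Hdet Htr. unfold tlen.
  rewrite (is_glb_Rbar_unique _ (Finite (arcosh (mtr M ^ 2 / 2 - 1)))); [reflexivity|].
  split.
  - intros r [z [Hz ->]]. simpl. apply tlen_lower_bound; auto.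
  - intros bound Hbound. destruct (tlen_attained M Hdet Htr) as [z [Hz Hd]].
    apply Hbound. exists z. auto.
Qed.

Lemma arcosh_add_inv r : 1 < r -> arcosh ((r + / r) ^ 2 / 2 - 1) = 2 * ln r.
Proof.
  intros Hr. unfold arcosh.
  assert (Hsqrt : sqrt (((r + / r) ^ 2 / 2 - 1) ^ 2 - 1) = (r ^ 2 - / r ^ 2) / 2).
  { replace (((r + / r) ^ 2 / 2 - 1) ^ 2 - 1) with (((r ^ 2 - / r ^ 2) / 2) ^ 2)
      by (field; lra).
    apply sqrt_pow2.
    assert (/ r < 1) by (rewrite <- Rinv_1; apply Rinv_lt_contravar; lra).
    assert (0 < / r) by (apply Rinv_0_lt_compat; lra).
    replace (/ r ^ 2) with (/ r * / r) by (field; lra). nra. }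
  rewrite Hsqrt.
  replace ((r + / r) ^ 2 / 2 - 1 + (r ^ 2 - / r ^ 2) / 2) with (r * r) by (field; lra).
  rewrite ln_mult; lra.
Qed.

Lemma tlen_add_inv M r : mdet M = 1 -> 1 < r -> mtr M = r + / r -> tlen M = 2 * ln r.
Proof.
  intros Hdet Hr Htr. rewrite tlen_formula, Htr; auto using arcosh_add_inv.
  rewrite Htr.
  assert (/ r < 1) by (rewrite <- Rinv_1; apply Rinv_lt_contravar; lra).
  assert (r * / r = 1) by (field; lra).
  nra.
Qed.

Lemma add_inv_surj t : 2 < t -> exists r, 1 < r /\ t = r + / r.
Proof.
  intros Ht. set (s := sqrt (t ^ 2 - 4)).
  assert (Hs : 0 <= s) by apply sqrt_pos.
  assert (Hs2 : s ^ 2 = t ^ 2 - 4) by (apply pow2_sqrt; nra).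
  exists ((t + s) / 2). split; [lra|].
  replace (/ ((t + s) / 2)) with ((t - s) / 2); [field|].
  apply (Rmult_eq_reg_l ((t + s) / 2)); [|lra].
  rewrite Rinv_r by lra.
  replace ((t + s) / 2 * ((t - s) / 2)) with ((t ^ 2 - s ^ 2) / 4) by field.
  rewrite Hs2. field.
Qed.

Lemma add_inv_lt x y : 1 <= x -> x < y -> x + / x < y + / y.
Proof.
  intros Hx Hxy.
  assert (0 < (y - x) * (x * y - 1) / (x * y)).
  { apply Rdiv_lt_0_compat; [apply Rmult_lt_0_compat|]; nra. }
  assert (y + / y - (x + / x) = (y - x) * (x * y - 1) / (x * y)) by (field; lra).
  lra.
Qed.

Lemma sign_sub_incr (D : R -> Prop) (f : R -> R) x y :
  (forall u v, D u -> D v -> u < v -> f u < f v) -> D x -> D y ->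
  sign (f x - f y) = sign (x - y).
Proof.
  intros Hf Hx Hy. destruct (Rtotal_order x y) as [H|[<-|H]].
  - specialize (Hf x y Hx Hy H). rewrite !sign_eq_m1; auto; lra.
  - now rewrite !Rminus_diag.
  - specialize (Hf y x Hy Hx H). rewrite !sign_eq_1; auto; lra.
Qed.

Lemma sign_eq_cases a b : sign a = sign b ->
  (a < 0 <-> b < 0) /\ (a = 0 <-> b = 0) /\ (0 < a <-> 0 < b).
Proof.
  intros E.
  destruct (Rtotal_order a 0) as [Ha|[Ha|Ha]], (Rtotal_order b 0) as [Hb|[Hb|Hb]];
    subst; rewrite ?sign_0, ?(sign_eq_m1 a), ?(sign_eq_m1 b), ?(sign_eq_1 a), ?(sign_eq_1 b)
      in E by lra;
    repeat split; lra.
Qed.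

Lemma tlen_sub_sign M X : mdet M = 1 -> 2 < mtr M -> 1 < X ->
  sign (tlen M - 2 * ln X) = sign (mtr M - (X + / X)).
Proof.
  intros Hdet Htr HX. destruct (add_inv_surj _ Htr) as [r [Hr Er]].
  rewrite (tlen_add_inv M r), Er by auto.
  rewrite (sign_sub_incr (fun u => 0 < u) (fun u => 2 * ln u)) by
    (auto using Rmult_lt_compat_l, ln_increasing with real; lra).
  rewrite (sign_sub_incr (fun u => 1 <= u) (fun u => u + / u)); auto using add_inv_lt; lra.
Qed.

(* Homogeneous coordinates of a boundary point: x is (x : 1) and oo is (1 : 0). *)
Definition hc1 (p : P1) : R := match p with Some a => a | None => 1 end.
Definition hc2 (p : P1) : R := match p with Some _ => 1 | None => 0 end.
Definition hdet (p q : P1) : R := hc1 p * hc2 q - hc2 p * hc1 q.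

Lemma hdet_eq0 p q : hdet p q = 0 <-> p = q.
Proof.
  destruct p as [p|], q as [q|]; unfold hdet; simpl; split; intro H;
    try discriminate; try lra.
  - f_equal; lra.
  - inversion H; lra.
  - reflexivity.
Qed.

Lemma hdet_neq0 p q : p <> q -> hdet p q <> 0.
Proof. intros Hpq H. now apply Hpq, hdet_eq0. Qed.

Lemma hdet_plucker p q r s :
  hdet p q * hdet r s = hdet p s * hdet r q - hdet p r * hdet s q.
Proof. unfold hdet; ring. Qed.

Lemma hc_neq0 p : hc1 p <> 0 \/ hc2 p <> 0.
Proof. destruct p; simpl; lra. Qed.

Definition eigenpoint (A : M2) (l : R) (p : P1) : Prop :=
  m11 A * hc1 p + m12 A * hc2 p = l * hc1 p /\ m21 A * hc1 p + m22 A * hc2 p = l * hc2 p.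

Lemma eigenline_eigenpoint A l p : eigenline A l p -> eigenpoint A l p.
Proof.
  intros [x [y [Hnz [E1 [E2 ->]]]]]. unfold proj, eigenpoint.
  destruct (Req_EM_T y 0) as [->|Hy]; simpl.
  - assert (Hx : x <> 0) by lra.
    assert (Ha : (m11 A - l) * x = 0) by lra.
    assert (Hc : m21 A * x = 0) by lra.
    apply Rmult_integral in Ha; apply Rmult_integral in Hc.
    split; [destruct Ha | destruct Hc]; lra.
  - split.
    + replace (m11 A * (x / y) + m12 A * 1) with ((m11 A * x + m12 A * y) / y) by (field; auto).
      rewrite E1. field; auto.
    + replace (m21 A * (x / y) + m22 A * 1) with ((m21 A * x + m22 A * y) / y) by (field; auto).
      rewrite E2. field; auto.
Qed.

Lemma eigenpoint_charpoly A l p : mdet A = 1 -> eigenpoint A l p ->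
  l ^ 2 - mtr A * l + 1 = 0.
Proof.
  destruct A as [a b c d]. unfold mdet, mtr, eigenpoint; cbn [m11 m12 m21 m22].
  intros Hdet [E1 E2].
  replace (l ^ 2 - (a + d) * l + 1) with ((a - l) * (d - l) - b * c) by (rewrite <- Hdet; ring).
  destruct (hc_neq0 p) as [Hx|Hy].
  - apply (Rmult_eq_reg_r (hc1 p)); auto.
    transitivity ((d - l) * ((a * hc1 p + b * hc2 p) - l * hc1 p)
                  - b * ((c * hc1 p + d * hc2 p) - l * hc2 p)); [ring|].
    rewrite E1, E2. ring.
  - apply (Rmult_eq_reg_r (hc2 p)); auto.
    transitivity ((a - l) * ((c * hc1 p + d * hc2 p) - l * hc2 p)
                  - c * ((a * hc1 p + b * hc2 p) - l * hc1 p)); [ring|].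
    rewrite E1, E2. ring.
Qed.

Lemma charpoly_roots_mul t l k : l ^ 2 - t * l + 1 = 0 -> k ^ 2 - t * k + 1 = 0 ->
  l <> k -> l * k = 1.
Proof.
  intros El Ek Hlk.
  assert (Hsum : (l - k) * (l + k - t) = 0).
  { transitivity ((l ^ 2 - t * l + 1) - (k ^ 2 - t * k + 1)); [ring|]. rewrite El, Ek. ring. }
  apply Rmult_integral in Hsum. destruct Hsum as [Hsum|Hsum]; [lra|].
  replace t with (l + k) in El by lra. nra.
Qed.

Lemma eigenpoint_entries A l k p q : hdet p q <> 0 ->
  eigenpoint A l p -> eigenpoint A k q ->
  m11 A = (l * hc1 p * hc2 q - k * hc1 q * hc2 p) / hdet p q /\
  m12 A = (k - l) * hc1 p * hc1 q / hdet p q /\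
  m21 A = (l - k) * hc2 p * hc2 q / hdet p q /\
  m22 A = (k * hc1 p * hc2 q - l * hc2 p * hc1 q) / hdet p q.
Proof.
  destruct A as [a b c d]. unfold eigenpoint, hdet; cbn [m11 m12 m21 m22].
  intros Hpq [E1 E2] [E3 E4].
  repeat split; apply (Rmult_eq_reg_r (hc1 p * hc2 q - hc2 p * hc1 q)); auto.
  - transitivity (hc2 q * (a * hc1 p + b * hc2 p) - hc2 p * (a * hc1 q + b * hc2 q));
      [ring | rewrite E1, E3; field; auto].
  - transitivity (hc1 p * (a * hc1 q + b * hc2 q) - hc1 q * (a * hc1 p + b * hc2 p));
      [ring | rewrite E1, E3; field; auto].
  - transitivity (hc2 q * (c * hc1 p + d * hc2 p) - hc2 p * (c * hc1 q + d * hc2 q));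
      [ring | rewrite E2, E4; field; auto].
  - transitivity (hc1 p * (c * hc1 q + d * hc2 q) - hc1 q * (c * hc1 p + d * hc2 p));
      [ring | rewrite E2, E4; field; auto].
Qed.

Lemma eigenpoint_unique A l k p q : mdet A = 1 -> l * k <> 1 ->
  eigenpoint A l p -> eigenpoint A k q -> p = q.
Proof.
  intros Hdet Hlk Hp Hq.
  assert (Hl : l = k).
  { apply NNPP. intro Hne. apply Hlk, (charpoly_roots_mul (mtr A));
      eauto using eigenpoint_charpoly. }
  subst k.
  apply hdet_eq0. apply NNPP. intro Hpq.
  destruct (eigenpoint_entries A l l p q Hpq Hp Hq) as [Ha [Hb [Hc Hd]]].
  apply Hlk. rewrite <- Hdet. unfold mdet. rewrite Ha, Hb, Hc, Hd.
  unfold hdet in *. field. auto.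
Qed.

Lemma eigenpoint_hdet_neq0 A l k p q : l <> k ->
  eigenpoint A l p -> eigenpoint A k q -> hdet p q <> 0.
Proof.
  intros Hlk [E1 E2] [E3 E4] H. apply hdet_eq0 in H. subst q.
  assert (H1 : (l - k) * hc1 p = 0) by lra. assert (H2 : (l - k) * hc2 p = 0) by lra.
  apply Rmult_integral in H1; apply Rmult_integral in H2.
  destruct (hc_neq0 p); destruct H1, H2; lra.
Qed.

Lemma common_eigenpoints_commute A B la ka mb nb p q : hdet p q <> 0 ->
  eigenpoint A la p -> eigenpoint A ka q -> eigenpoint B mb p -> eigenpoint B nb q ->
  mmul A B = mmul B A.
Proof.
  intros Hpq HAp HAq HBp HBq.
  destruct (eigenpoint_entries A la ka p q Hpq HAp HAq) as [a1 [a2 [a3 a4]]].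
  destruct (eigenpoint_entries B mb nb p q Hpq HBp HBq) as [b1 [b2 [b3 b4]]].
  unfold mmul. rewrite a1, a2, a3, a4, b1, b2, b3, b4.
  unfold hdet in *. f_equal; field; auto.
Qed.

Lemma trace_mul_eigenpoints A B la ka mb nb p q r s : hdet p q <> 0 -> hdet r s <> 0 ->
  eigenpoint A la p -> eigenpoint A ka q -> eigenpoint B mb r -> eigenpoint B nb s ->
  mtr (mmul A B) * (hdet p q * hdet r s) =
  (la * mb + ka * nb) * (hdet p s * hdet r q) - (la * nb + ka * mb) * (hdet p r * hdet s q).
Proof.
  intros Hpq Hrs HAp HAq HBr HBs.
  destruct (eigenpoint_entries A la ka p q Hpq HAp HAq) as [a1 [a2 [a3 a4]]].
  destruct (eigenpoint_entries B mb nb r s Hrs HBr HBs) as [b1 [b2 [b3 b4]]].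
  unfold mtr, mmul; cbn [m11 m12 m21 m22]. rewrite a1, a2, a3, a4, b1, b2, b3, b4.
  unfold hdet in *. field. auto.
Qed.

Lemma attr_fp_eigenpoint A p : hyperbolic A -> attr_fp A p ->
  exists l, 1 < l /\ eigenpoint A l p.
Proof.
  unfold hyperbolic. intros hA [[[_ Htr] _] | [_ [l [Hl He]]]]; [lra|].
  eauto using eigenline_eigenpoint.
Qed.

Lemma rep_fp_eigenpoint A p : hyperbolic A -> rep_fp A p ->
  exists l, 0 < l < 1 /\ eigenpoint A l p.
Proof.
  unfold hyperbolic. intros hA [[[_ Htr] _] | [_ [l [Hl He]]]]; [lra|].
  eauto using eigenline_eigenpoint.
Qed.

Lemma attr_fp_unique A p q : mdet A = 1 -> hyperbolic A ->
  attr_fp A p -> attr_fp A q -> p = q.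
Proof.
  intros Hdet hA Hp Hq.
  destruct (attr_fp_eigenpoint A p hA Hp) as [l [Hl Ep]].
  destruct (attr_fp_eigenpoint A q hA Hq) as [k [Hk Eq]].
  apply (eigenpoint_unique A l k); auto. nra.
Qed.

Lemma rep_fp_unique A p q : mdet A = 1 -> hyperbolic A ->
  rep_fp A p -> rep_fp A q -> p = q.
Proof.
  intros Hdet hA Hp Hq.
  destruct (rep_fp_eigenpoint A p hA Hp) as [l [Hl Ep]].
  destruct (rep_fp_eigenpoint A q hA Hq) as [k [Hk Eq]].
  apply (eigenpoint_unique A l k); auto. nra.
Qed.

Lemma hyperbolic_eigenpoints A p q : mdet A = 1 -> hyperbolic A ->
  attr_fp A p -> rep_fp A q ->
  exists l, 1 < l /\ eigenpoint A l p /\ eigenpoint A (/ l) q /\ hdet p q <> 0.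
Proof.
  intros Hdet hA Hp Hq.
  destruct (attr_fp_eigenpoint A p hA Hp) as [l [Hl Ep]].
  destruct (rep_fp_eigenpoint A q hA Hq) as [k [Hk Eq]].
  assert (Hlk : l * k = 1)
    by (apply (charpoly_roots_mul (mtr A)); eauto using eigenpoint_charpoly; lra).
  replace k with (/ l) in Eq by (field_simplify_eq; lra).
  exists l. do 3 (split; [assumption|]).
  apply (eigenpoint_hdet_neq0 A l (/ l)); auto.
  assert (/ l < 1) by (rewrite <- Rinv_1; apply Rinv_lt_contravar; lra). lra.
Qed.

Lemma Iplus_interval A B ap bp I : mdet A = 1 -> mdet B = 1 ->
  hyperbolic A -> hyperbolic B -> attr_fp A ap -> attr_fp B bp ->
  Iplus A B I -> interval_choice (act A) (act B) ap bp I.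
Proof.
  intros HA HB hA hB Hap Hbp [ap' [bp' [Hap' [Hbp' HI]]]].
  now rewrite (attr_fp_unique A ap ap'), (attr_fp_unique B bp bp').
Qed.

Lemma Iminus_interval A B am bm I : mdet A = 1 -> mdet B = 1 ->
  hyperbolic A -> hyperbolic B -> rep_fp A am -> rep_fp B bm ->
  Iminus A B I -> interval_choice (act (minv A)) (act (minv B)) am bm I.
Proof.
  intros HA HB hA hB Ham Hbm [am' [bm' [Ham' [Hbm' HI]]]].
  now rewrite (rep_fp_unique A am am'), (rep_fp_unique B bm bm').
Qed.

(* The sign of [hdet a x * hdet b x] tells on which side of the chord ab the point x lies. *)
Lemma strictly_between_hdet a b x : a <> b -> strictly_between b a x ->
  hdet a x * hdet b x * hdet a b < 0.
Proof.
  intros Hab H.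
  destruct a as [a|], b as [b|], x as [x|]; unfold hdet; simpl in *; try tauto;
    try destruct (Rlt_dec b a); try nra.
  all: assert (a <> b) by congruence.
  - assert (0 < (a * 1 - 1 * x) * (1 * x - b * 1)) by nra. nra.
  - assert (a < b) by (destruct (Rtotal_order a b) as [?|[?|?]]; [auto | contradiction | tauto]).
    destruct H as [H|H]; assert (0 < (a * 1 - 1 * x) * (b * 1 - 1 * x)) by nra; nra.
Qed.

Lemma not_cinterval a b x : a <> b -> ~ cinterval a b x -> strictly_between b a x.
Proof.
  intros Hab Hn. unfold cinterval in Hn.
  destruct a as [a|], b as [b|], x as [x|]; simpl in *; try tauto.
  - assert (a <> b) by congruence.
    assert (x <> a) by (intro E; rewrite E in Hn; tauto).
    assert (x <> b) by (intro E; rewrite E in Hn; tauto).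
    destruct (Rlt_dec a b), (Rlt_dec b a); lra.
  all: match goal with |- ?u < ?v => destruct (Rtotal_order u v) as [?|[E|?]] end;
    [auto | subst; exfalso; first [congruence | apply Hn; auto]
     | exfalso; apply Hn; right; right; lra].
Qed.

Lemma outside_cinterval_pos a b x y : a <> b ->
  ~ cinterval a b x -> ~ cinterval a b y ->
  0 < hdet a x * hdet a y * hdet b x * hdet b y.
Proof.
  intros Hab Hx Hy.
  pose proof (strictly_between_hdet a b x Hab (not_cinterval a b x Hab Hx)) as Sx.
  pose proof (strictly_between_hdet a b y Hab (not_cinterval a b y Hab Hy)) as Sy.
  assert (Hsq : 0 < hdet a b ^ 2) by (apply pow2_gt_0, hdet_neq0; auto).
  assert (0 < (hdet a x * hdet a y * hdet b x * hdet b y) * hdet a b ^ 2).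
  { replace ((hdet a x * hdet a y * hdet b x * hdet b y) * hdet a b ^ 2)
      with ((hdet a x * hdet b x * hdet a b) * (hdet a y * hdet b y * hdet a b)) by ring.
    nra. }
  nra.
Qed.

Lemma interval_choice_ends f g a b I : interval_choice f g a b I -> I a /\ I b.
Proof. intros [[<- H] | [_ [[H|H] _]]]; split; apply H; unfold cinterval; auto. Qed.

Lemma outside_interval_choice_pos f g a b I x y : interval_choice f g a b I ->
  ~ I x -> ~ I y -> 0 < hdet a x * hdet a y * hdet b x * hdet b y.
Proof.
  intros [[<- H] | [Hab [[H|H] _]]] Hx Hy.
  - assert (hdet a x <> 0) by (apply hdet_neq0; intros <-; apply Hx, H; auto).
    assert (hdet a y <> 0) by (apply hdet_neq0; intros <-; apply Hy, H; auto).
    replace (hdet a x * hdet a y * hdet a x * hdet a y) with ((hdet a x * hdet a y) ^ 2) by ring.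
    apply pow2_gt_0, Rmult_integral_contrapositive; auto.
  - apply outside_cinterval_pos; auto; intro Hc; [apply Hx | apply Hy]; apply H; auto.
  - replace (hdet a x * hdet a y * hdet b x * hdet b y)
      with (hdet b x * hdet b y * hdet a x * hdet a y) by ring.
    apply outside_cinterval_pos; auto; intro Hc; [apply Hx | apply Hy]; apply H; auto.
Qed.

Definition geod_eq (p q : P1) (x y : R) : R :=
  (x * hc2 p - hc1 p) * (x * hc2 q - hc1 q) + y ^ 2 * hc2 p * hc2 q.

Lemma geod_eq_sym p q x y : geod_eq p q x y = geod_eq q p x y.
Proof. unfold geod_eq; ring. Qed.

Lemma on_geodesic_iff p q z : on_geodesic p q z <-> in_H z /\ geod_eq p q (Re z) (Im z) = 0.
Proof.
  destruct z as [x y]. unfold on_geodesic, in_H, geod_eq.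
  change (Re (x, y)) with x; change (Im (x, y)) with y.
  destruct p as [p|], q as [q|]; simpl hc1; simpl hc2.
  - replace ((x * 1 - p) * (x * 1 - q) + y ^ 2 * 1 * 1)
      with ((x - (p + q) / 2) ^ 2 + y ^ 2 - ((p - q) / 2) ^ 2) by field.
    split.
    + intros [Hy [Hpq E]]. split; auto. lra.
    + intros [Hy E]. do 2 (split; auto); [|lra]. intros <-.
      assert (0 <= (x - (p + p) / 2) ^ 2) by apply pow2_ge_0.
      assert (0 < y ^ 2) by (apply pow2_gt_0; lra).
      replace (((p - p) / 2) ^ 2) with 0 in E by field. lra.
  - split; intros [Hy E]; split; auto; lra.
  - split; intros [Hy E]; split; auto; lra.
  - split; [intros [_ []] | intros [Hy E]; lra].
Qed.

Lemma geod_eq_endpoint_unique p q s x y : 0 < y ->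
  geod_eq p q x y = 0 -> geod_eq p s x y = 0 -> q = s.
Proof.
  intros Hy Gq Gs. apply hdet_eq0, NNPP. intro Hqs.
  set (u := x * hc2 p - hc1 p). set (v := x * u + y ^ 2 * hc2 p).
  assert (Hu : hdet q s * u = hc2 q * geod_eq p s x y - hc2 s * geod_eq p q x y)
    by (unfold hdet, u, geod_eq; ring).
  assert (Hv : hdet q s * v = hc1 q * geod_eq p s x y - hc1 s * geod_eq p q x y)
    by (unfold hdet, v, u, geod_eq; ring).
  rewrite Gq, Gs in Hu, Hv.
  assert (Hu0 : u = 0) by (apply (Rmult_eq_reg_l (hdet q s)); auto; lra).
  assert (Hv0 : v = 0) by (apply (Rmult_eq_reg_l (hdet q s)); auto; lra).
  assert (0 < y ^ 2) by (apply pow2_gt_0; lra).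
  assert (H2 : hc2 p = 0).
  { unfold v in Hv0. rewrite Hu0, Rmult_0_r, Rplus_0_l in Hv0.
    apply Rmult_integral in Hv0. lra. }
  unfold u in Hu0. rewrite H2 in Hu0. destruct (hc_neq0 p); lra.
Qed.

Lemma geod_intersecting_share_same p q r s : geod_intersecting p q r s ->
  share_endpoint p q r s -> same_endpoints p q r s.
Proof.
  intros [[x y] [G1 G2]]. rewrite on_geodesic_iff in G1, G2.
  destruct G1 as [Hy G1], G2 as [_ G2]. unfold in_H in Hy. simpl in *.
  unfold same_endpoints. intros [<-|[<-|[<-|<-]]].
  - left. split; auto. exact (geod_eq_endpoint_unique p q s x y Hy G1 G2).
  - right. split; auto. rewrite geod_eq_sym in G2.
    exact (geod_eq_endpoint_unique p q r x y Hy G1 G2).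
  - right. split; auto. rewrite geod_eq_sym in G1.
    exact (geod_eq_endpoint_unique q p s x y Hy G1 G2).
  - left. split; auto. rewrite geod_eq_sym in G1, G2.
    exact (geod_eq_endpoint_unique q p r x y Hy G1 G2).
Qed.

(* The geodesic [geod_eq p q] is the circle a (x^2 + y^2) + b x + c = 0. *)
Definition circ_a (p q : P1) : R := hc2 p * hc2 q.
Definition circ_b (p q : P1) : R := - (hc2 p * hc1 q + hc1 p * hc2 q).
Definition circ_c (p q : P1) : R := hc1 p * hc1 q.

Lemma geod_eq_circ p q x y :
  geod_eq p q x y = circ_a p q * (x ^ 2 + y ^ 2) + circ_b p q * x + circ_c p q.
Proof. unfold geod_eq, circ_a, circ_b, circ_c; ring. Qed.

(* A common point (x, y) of two such circles has (x^2 + y^2, x, 1) proportional to the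
   cross product of their coefficient vectors. *)
Definition circ_cross1 (p q r s : P1) : R := circ_b p q * circ_c r s - circ_c p q * circ_b r s.
Definition circ_cross2 (p q r s : P1) : R := circ_c p q * circ_a r s - circ_a p q * circ_c r s.
Definition circ_cross3 (p q r s : P1) : R := circ_a p q * circ_b r s - circ_b p q * circ_a r s.

Definition crossing (p q r s : P1) : R := hdet p s * hdet r q * (hdet p r * hdet s q).

Lemma circ_cross_discr p q r s :
  circ_cross1 p q r s * circ_cross3 p q r s - circ_cross2 p q r s ^ 2 = - crossing p q r s.
Proof.
  unfold circ_cross1, circ_cross2, circ_cross3, circ_a, circ_b, circ_c, crossing, hdet. ring.
Qed.

Lemma geod_intersecting_crossing_le p q r s :
  geod_intersecting p q r s -> crossing p q r s <= 0.
Proof.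
  intros [[x y] [G1 G2]]. rewrite on_geodesic_iff in G1, G2.
  destruct G1 as [_ G1], G2 as [_ G2]. simpl in G1, G2.
  rewrite geod_eq_circ in G1, G2.
  set (n1 := circ_cross1 p q r s). set (n2 := circ_cross2 p q r s).
  set (n3 := circ_cross3 p q r s).
  assert (Hc1 : circ_c p q = - (circ_a p q * (x ^ 2 + y ^ 2) + circ_b p q * x)) by lra.
  assert (Hc2 : circ_c r s = - (circ_a r s * (x ^ 2 + y ^ 2) + circ_b r s * x)) by lra.
  assert (E2 : n2 = n3 * x)
    by (unfold n2, n3, circ_cross2, circ_cross3; rewrite Hc1, Hc2; ring).
  assert (E1 : n1 = n3 * (x ^ 2 + y ^ 2))
    by (unfold n1, n3, circ_cross1, circ_cross3; rewrite Hc1, Hc2; ring).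
  rewrite <- (Ropp_involutive (crossing p q r s)), <- circ_cross_discr. fold n1 n2 n3.
  rewrite E1, E2.
  assert (0 <= (n3 * y) ^ 2) by apply pow2_ge_0. nra.
Qed.

Lemma crossing_neg_intersecting p q r s :
  crossing p q r s < 0 -> geod_intersecting p q r s.
Proof.
  intros H. pose proof (circ_cross_discr p q r s) as E.
  set (n1 := circ_cross1 p q r s) in *. set (n2 := circ_cross2 p q r s) in *.
  set (n3 := circ_cross3 p q r s) in *.
  assert (Hn3 : n3 <> 0).
  { intros Z. rewrite Z in E. assert (0 <= n2 ^ 2) by apply pow2_ge_0. lra. }
  assert (Hq : 0 < (n1 * n3 - n2 ^ 2) / n3 ^ 2).
  { apply Rdiv_lt_0_compat; [lra | apply pow2_gt_0; auto]. }
  set (y := sqrt ((n1 * n3 - n2 ^ 2) / n3 ^ 2)).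
  assert (Hy : 0 < y) by (apply sqrt_lt_R0; auto).
  assert (Hy2 : y ^ 2 = (n1 * n3 - n2 ^ 2) / n3 ^ 2) by (apply pow2_sqrt; lra).
  exists (n2 / n3, y). rewrite !on_geodesic_iff, !geod_eq_circ. unfold in_H.
  change (Re (n2 / n3, y)) with (n2 / n3). change (Im (n2 / n3, y)) with y.
  replace ((n2 / n3) ^ 2 + y ^ 2) with (n1 / n3) by (rewrite Hy2; field; auto).
  unfold n1, n2, n3, circ_cross1, circ_cross2, circ_cross3.
  split; split; auto; field; auto.
Qed.

Lemma crossing_eq0 p q r s : crossing p q r s = 0 <-> share_endpoint p q r s.
Proof.
  unfold crossing, share_endpoint. split.
  - intros H. apply Rmult_integral in H as [H|H]; apply Rmult_integral in H as [H|H];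
      apply hdet_eq0 in H; subst; tauto.
  - assert (Hd : forall a, hdet a a = 0) by (intro; apply hdet_eq0; auto).
    intros [<-|[<-|[<-|<-]]]; rewrite Hd; ring.
Qed.

Lemma geod_position_crossing p q r s : ~ same_endpoints p q r s ->
  (geod_intersecting p q r s <-> crossing p q r s < 0) /\
  (geod_asymptotically_parallel p q r s <-> crossing p q r s = 0) /\
  (geod_ultraparallel p q r s <-> 0 < crossing p q r s).
Proof.
  intros Hns.
  pose proof (geod_intersecting_crossing_le p q r s) as Hle.
  pose proof (crossing_neg_intersecting p q r s) as Hneg.
  assert (Hnz : geod_intersecting p q r s -> crossing p q r s <> 0).
  { intros Hi Z. apply Hns, geod_intersecting_share_same, crossing_eq0; auto. }
  unfold geod_asymptotically_parallel, geod_ultraparallel. rewrite <- crossing_eq0.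
  split; [|split]; split.
  - intros Hi. specialize (Hle Hi). specialize (Hnz Hi). lra.
  - exact Hneg.
  - intros [_ Z]. exact Z.
  - intros Z. split; assumption.
  - intros [Hni Hz]. destruct (Rtotal_order (crossing p q r s) 0) as [N|[Z|Pos]];
      [exfalso; auto | contradiction | exact Pos].
  - intros Hpos. split; [intros Hi; specialize (Hle Hi) | intros Z]; lra.
Qed.

Lemma mdet_mmul A B : mdet (mmul A B) = mdet A * mdet B.
Proof. unfold mdet, mmul; simpl; ring. Qed.

Lemma tlen_eigenpoint A l p : mdet A = 1 -> 1 < l -> eigenpoint A l p -> tlen A = 2 * ln l.
Proof.
  intros Hdet Hl Hp. apply tlen_add_inv; auto.
  pose proof (eigenpoint_charpoly A l p Hdet Hp).
  apply (Rmult_eq_reg_l l); [|lra]. field_simplify; lra.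
Qed.

(* Writing P = [ap,bm][bp,am] and Q = [ap,bp][bm,am] for the brackets [p,q] = hdet p q,
   the trace formula and the Pluecker relation give tr(AB) (P - Q) = T0 P - T1 Q with
   T0 = la mb + 1/(la mb) and T1 = la/mb + mb/la < T0. *)
Lemma trace_mul_sign A B la mb ap am bp bm : 1 < la -> 1 < mb ->
  hdet ap am <> 0 -> hdet bp bm <> 0 ->
  eigenpoint A la ap -> eigenpoint A (/ la) am ->
  eigenpoint B mb bp -> eigenpoint B (/ mb) bm ->
  0 < hdet ap am * hdet ap bm * hdet bp am * hdet bp bm ->
  2 < mtr (mmul A B) /\
  sign (mtr (mmul A B) - (la * mb + / (la * mb))) = sign (crossing ap am bp bm).
Proof.
  intros Hla Hmb DA DB EAp EAm EBp EBm Hpos.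
  pose proof (trace_mul_eigenpoints A B la (/ la) mb (/ mb) ap am bp bm DA DB EAp EAm EBp EBm)
    as Htr.
  replace (crossing ap am bp bm) with ((hdet ap bm * hdet bp am) * (hdet ap bp * hdet bm am))
    by (unfold crossing; ring).
  set (P := hdet ap bm * hdet bp am) in *. set (Q := hdet ap bp * hdet bm am) in *.
  assert (HPQ : hdet ap am * hdet bp bm = P - Q) by apply hdet_plucker.
  rewrite HPQ in Htr.
  replace (hdet ap am * hdet ap bm * hdet bp am * hdet bp bm) with ((P - Q) * P)
    in Hpos by (rewrite <- HPQ; unfold P; ring).
  set (t := mtr (mmul A B)) in *.
  set (T0 := la * mb + / la * / mb) in *. set (T1 := la * / mb + / la * mb) in *.
  assert (HT01 : 0 < T0 - T1).
  { replace (T0 - T1) with ((la - / la) * (mb - / mb)) by (unfold T0, T1; ring).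
    assert (/ la < 1) by (rewrite <- Rinv_1; apply Rinv_lt_contravar; lra).
    assert (/ mb < 1) by (rewrite <- Rinv_1; apply Rinv_lt_contravar; lra).
    apply Rmult_lt_0_compat; lra. }
  assert (HT1 : 2 <= T1).
  { assert (T1 - 2 = (la - mb) ^ 2 / (la * mb)) by (unfold T1; field; lra).
    assert (0 <= (la - mb) ^ 2 / (la * mb)) by (apply Rdiv_le_0_compat; [apply pow2_ge_0 | nra]).
    lra. }
  assert (HP : P <> 0) by (intros Z; rewrite Z in Hpos; lra).
  assert (E0 : (t - T0) * ((P - Q) * P) = (T0 - T1) * (P * Q))
    by (transitivity (t * (P - Q) * P - T0 * (P - Q) * P); [ring | rewrite Htr; ring]).
  assert (E1 : (t - T1) * ((P - Q) * P) = (T0 - T1) * P ^ 2)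
    by (transitivity (t * (P - Q) * P - T1 * (P - Q) * P); [ring | rewrite Htr; ring]).
  split.
  - assert (0 < (T0 - T1) * P ^ 2) by (apply Rmult_lt_0_compat; [lra | apply pow2_gt_0; auto]).
    assert (0 < t - T1); [|lra].
    apply (Rmult_lt_reg_r ((P - Q) * P)); auto. lra.
  - replace (/ (la * mb)) with (/ la * / mb) by (field; lra). fold T0.
    apply (f_equal sign) in E0.
    rewrite (sign_mult (t - T0)), (sign_mult (T0 - T1)), (sign_eq_1 ((P - Q) * P)),
      (sign_eq_1 (T0 - T1)) in E0 by auto.
    lra.
Qed.

Theorem theorem2p5 (A B : M2) (ap am bp bm : P1) :
  in_SL2 A -> in_SL2 B ->
  mmul A B <> mmul B A ->
  hyperbolic A -> hyperbolic B ->
  2 <= mtr A -> 2 <= mtr B ->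
  attr_fp A ap -> rep_fp A am -> attr_fp B bp -> rep_fp B bm ->
  coherently_oriented A B ->
  (exists Ip Im, Iplus A B Ip /\ Iminus A B Im /\ forall x, ~ (Ip x /\ Im x)) ->
  (tlen (mmul A B) < tlen A + tlen B <-> geod_intersecting ap am bp bm) /\
  (tlen (mmul A B) = tlen A + tlen B <-> geod_asymptotically_parallel ap am bp bm) /\
  (tlen (mmul A B) > tlen A + tlen B <-> geod_ultraparallel ap am bp bm).
Proof.
  unfold in_SL2.
  intros HA HB Hnc hA hB _ _ Hap Ham Hbp Hbm _ [Ip [Im [HIp [HIm Hdisj]]]].
  destruct (hyperbolic_eigenpoints A ap am HA hA Hap Ham) as [la [Hla [EAp [EAm DA]]]].
  destruct (hyperbolic_eigenpoints B bp bm HB hB Hbp Hbm) as [mb [Hmb [EBp [EBm DB]]]].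
  assert (Hpos : 0 < hdet ap am * hdet ap bm * hdet bp am * hdet bp bm).
  { apply (Iplus_interval A B ap bp) in HIp; apply (Iminus_interval A B am bm) in HIm; auto.
    destruct (interval_choice_ends _ _ _ _ _ HIm) as [Iam Ibm].
    apply (outside_interval_choice_pos _ _ _ _ _ _ _ HIp); intro; eapply Hdisj; eauto. }
  destruct (trace_mul_sign A B la mb ap am bp bm) as [Htr Hsign]; auto.
  assert (Hlen : sign (tlen (mmul A B) - (tlen A + tlen B)) = sign (crossing ap am bp bm)).
  { rewrite <- Hsign, (tlen_eigenpoint A la ap), (tlen_eigenpoint B mb bp) by auto.
    replace (2 * ln la + 2 * ln mb) with (2 * ln (la * mb)) by (rewrite ln_mult; lra).
    apply tlen_sub_sign; auto; [rewrite mdet_mmul, HA, HB; ring | nra]. }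
  assert (Hns : ~ same_endpoints ap am bp bm).
  { intros [[<- <-] | [<- <-]]; apply Hnc; eapply common_eigenpoints_commute; eauto. }
  destruct (geod_position_crossing _ _ _ _ Hns) as [Gi [Ga Gu]].
  destruct (sign_eq_cases _ _ Hlen) as [Slt [Seq Sgt]].
  rewrite Gi, Ga, Gu, <- Slt, <- Seq, <- Sgt.
  repeat split; intros; lra.
Qed.
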